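(* Let $s\ge1$, let $q$ be a prime power, let $C^{(1)},\ldots,C^{(s)}\in\mathbb{F}_q^{\mathbb{N}\times\mathbb{N}_0}$ be finite-row generating matrices and let $\mathbf{T}:\mathbb{N}_0\to\mathbb{N}_0$ with $\mathbf{T}(m)\le m$. If $C^{(1)},\ldots,C^{(s)}$ generate a $(\mathbf{T},s)$-sequence in base $q$ via Algorithm 1 (for some admissible choice of the bijections), then, for every choice of bijections $\psi_r,\lambda_{i,j}$, Algorithm 2 with the same matrices and the input sequence $s_n=(-1)^n\lfloor (n+1)/2\rfloor$ ($n\ge0$), viewed in $\mathbb{Z}_q$, produces a sequence $(\boldsymbol{x}_n)_{n\ge0}$ such that both subsequences $(\boldsymbol{x}_{2n})_{n\ge0}$ and $(\boldsymbol{x}_{2n+1})_{n\ge0}$ are $(\mathbf{T},s)$-sequences in base $q$.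
   Context: $\mathbb{F}_q$ is the finite field with $q$ elements, $D_q=\{0,\ldots,q-1\}$; $\mathbb{Z}_q$ is the ring of $q$-adic integers, each $z\in\mathbb{Z}_q$ having a unique representation $z=\sum_{r\ge0}a_rq^r$, $a_r\in D_q$. A matrix $(c^{(i)}_{j,r})_{j\ge1,r\ge0}$ is finite-row if each row has finitely many nonzero entries. Algorithm 2: choose bijections $\psi_r:D_q\to\mathbb{F}_q$ ($r\ge0$), finite-row matrices $C^{(i)}=(c^{(i)}_{j,r})$, bijections $\lambda_{i,j}:\mathbb{F}_q\to D_q$ and $(s_n)$ in $\mathbb{Z}_q$; with $s_n=\sum_ra_rq^r$ put $x_n^{(i)}=\sum_{j\ge1}\lambda_{i,j}(\sum_rc^{(i)}_{j,r}\psi_r(a_r))q^{-j}$, $\boldsymbol{x}_n=(x_n^{(1)},\ldots,x_n^{(s)})$. Algorithm 1 is the same with $s_n=n$ and $\psi_r(0)=0$ for all large $r$. The $m$-digit truncation $[x_n^{(i)}]_{q,m}=\sum_{j=1}^m\lambda_{i,j}(\cdots)q^{-j}$, applied coordinatewise. Elementary interval in base $q$: $\prod_i[a_iq^{-d_i},(a_i+1)q^{-d_i})$, $d_i\ge0$, $0\le a_i<q^{d_i}$. For $0\le t\le m$, a $(t,m,s)$-net in base $q$ is a set of $q^m$ points in $[0,1)^s$ with exactly $q^t$ points in every elementary interval of volume $q^{t-m}$. A sequence $(\boldsymbol{y}_n)$ is a $(\mathbf{T},s)$-sequence in base $q$ if for all $k\ge0$ and $m$ with $\mathbf{T}(m)<m$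 the points $[\boldsymbol{y}_n]_{q,m}$, $kq^m\le n<(k+1)q^m$, form a $(\mathbf{T}(m),m,s)$-net in base $q$. *)

From HB Require Import structures.
From mathcomp Require Import all_boot all_order all_algebra.
Set Implicit Arguments. Unset Strict Implicit. Unset Printing Implicit Defensive.
Import Order.TTheory GRing.Theory Num.Theory.
Local Open Scope ring_scope.

(* Base field F = F_q with q := #|F| (a finite field; q is automatically a
   prime power).  Digit set D_q = {0,...,q-1} is the ordinal type 'I_#|F|. *)

Lemma card_F_gt0 (F : finFieldType) : (0 < #|F|)%N.
Proof. by apply/card_gt0P; exists 0. Qed.

Definition ord_q (F : finFieldType) (x : nat) : 'I_#|F| :=
  Ordinal (ltn_pmod x (card_F_gt0 F)).

(* A q-adic integer is represented by its (unique) digit sequence r |-> a_r.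
   The q-adic expansion of an ordinary integer z: a_r = floor(z / q^r) mod q. *)
Definition qadic_of_int (F : finFieldType) (z : int) : nat -> 'I_#|F| :=
  fun r => ord_q F (absz (intdiv.modz (intdiv.divz z (#|F| ^ r)%N%:Z) (#|F|)%:Z)).

(* Finite-row generating matrices: C i j is row j (j >= 1) of C^(i+1), given
   as a finite list; c_{j,r} = nth 0 (C i j) r (zero beyond the list). *)
Definition entry (F : finFieldType) (row : seq F) (r : nat) : F := nth 0 row r.

(* j-th digit (j >= 1) of coordinate i of the point produced from the q-adic
   integer with digits a, by Algorithm 2 with data (psi, C, lam). *)
Definition alg_digit (F : finFieldType) (s : nat) (C : 'I_s -> nat -> seq F)
  (psi : nat -> 'I_#|F| -> F) (lam : 'I_s -> nat -> F -> 'I_#|F|)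
  (a : nat -> 'I_#|F|) (i : 'I_s) (j : nat) : 'I_#|F| :=
  lam i j (\sum_(r < size (C i j)) entry (C i j) r * psi r (a r)).

Definition alg_trunc (F : finFieldType) (s : nat) (C : 'I_s -> nat -> seq F)
  (psi : nat -> 'I_#|F| -> F) (lam : 'I_s -> nat -> F -> 'I_#|F|)
  (a : nat -> 'I_#|F|) (m : nat) (i : 'I_s) : rat :=
  \sum_(1 <= j < m.+1) (alg_digit C psi lam a i j : nat)%:R / (#|F| ^ j)%N%:R.

Definition in_elem_interval (s q : nat) (d a : 'I_s -> nat) (x : 'I_s -> rat)
  : bool :=
  [forall i, ((a i)%:R / (q ^ d i)%N%:R <= x i)
             && (x i < (a i).+1%:R / (q ^ d i)%N%:R)].

Definition is_net (s q t m : nat) (P : 'I_(q ^ m) -> 'I_s -> rat) : Prop :=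
  (t <= m)%N /\
  (forall n i, 0 <= P n i < 1) /\
  (forall d a : 'I_s -> nat, (\sum_i d i)%N = (m - t)%N ->
     (forall i, (a i < q ^ d i)%N) ->
     #|[set n : 'I_(q ^ m) | in_elem_interval q d a (P n)]| = (q ^ t)%N).

(* (T,s)-sequence in base q; P m n is the m-digit truncation [y_n]_{q,m}. *)
Definition is_TS_seq (s q : nat) (T : nat -> nat)
  (P : nat -> nat -> 'I_s -> rat) : Prop :=
  forall k m : nat, (T m < m)%N ->
    @is_net s q (T m) m (fun n : 'I_(q ^ m) => P m (k * q ^ m + n)%N).

Definition alt_seq (n : nat) : int := (-1) ^+ n * ((n.+1)./2)%:Z.

From HB Require Import structures.
From mathcomp Require Import all_boot all_order all_algebra.
From mathcomp Require Import zify ring.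
Set Implicit Arguments. Unset Strict Implicit. Unset Printing Implicit Defensive.
Import Order.TTheory GRing.Theory Num.Theory.

(** On a block of [q^m] consecutive indices [n], the [m] low [q]-adic digits of
   [s_n] run bijectively through [D_q^m] while the higher digits stay constant;
   this holds for [s_(2n) = n] and, by complementation of digits, for
   [s_(2n+1) = -(n+1)].  On such a block the [j]-th digit of coordinate [i] is
   [lam_(i,j) (L_(i,j) v + e_(i,j))], where [v = (psi_r a_r)_(r<m)] and
   [L_(i,j)] is the linear form given by the first [m] entries of row [j] of
   [C^(i)].  So an elementary interval contains as many points as the linear
   system [L_(i,j) v = y_(i,j)] ([1 <= j <= d_i]) has solutions, and changing
   the bijections only changes the right-hand side [y].  The net property of
   the first block of Algorithm 1 therefore says that every such system has
   [q^t] solutions, which gives the net property of every block of both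
   subsequences. *)

Section Digits.
Variable Q : nat.

Definition digit (n r : nat) : nat := (n %/ Q ^ r) %% Q.

(* [f 1] is the most significant digit, as in the expansion of a point of [0,1). *)
Fixpoint nat_of_digits (d : nat) (f : nat -> nat) : nat :=
  if d is d'.+1 then nat_of_digits d' f * Q + f d else 0.

Lemma eq_nat_of_digits d f g :
  (forall j, 0 < j <= d -> f j = g j) -> nat_of_digits d f = nat_of_digits d g.
Proof.
elim: d => //= d IH fg; rewrite fg ?ltnSn // IH // => j /andP[j0 jd].
by rewrite fg // j0 ltnW.
Qed.

Lemma nat_of_digits_lt d f : (forall j, f j < Q) -> nat_of_digits d f < Q ^ d.
Proof.
move=> fQ; elim: d => [|d IH] /=; first by rewrite expn0.
have := fQ d.+1; rewrite expnS; nia.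
Qed.

Lemma nat_of_digits_inj d f g : (forall j, f j < Q) -> (forall j, g j < Q) ->
  nat_of_digits d f = nat_of_digits d g -> forall j, 0 < j <= d -> f j = g j.
Proof.
move=> fQ gQ; elim: d => [|d IH] /=; first by move=> _ [].
have Q_gt0 : 0 < Q by apply: leq_ltn_trans (fQ 0).
move=> fg j /andP[j0]; rewrite leq_eqVlt ltnS => /orP[/eqP->|jd].
  by move: (congr1 (modn^~ Q) fg); rewrite !modnMDl !modn_small.
apply: IH; rewrite ?j0 //.
by move: (congr1 (divn^~ Q) fg); rewrite !divnMDl // !divn_small // !addn0.
Qed.

Lemma nat_of_digitsD d e f :
  nat_of_digits (d + e) f = nat_of_digits d f * Q ^ e + nat_of_digits e (fun j => f (d + j)).
Proof.
elim: e => [|e IH] /=; first by rewrite addn0 expn0 muln1 addn0.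
by rewrite addnS /= IH expnSr mulnDl -mulnA addnA.
Qed.

Hypothesis Q_gt0 : 0 < Q.

Lemma nat_of_digitsK d n : n < Q ^ d -> nat_of_digits d (fun j => digit n (d - j)) = n.
Proof.
elim: d n => [|d IH] n /=; first by rewrite expn0 ltnS leqn0 => /eqP->.
move=> ltn; rewrite /digit subnn expn0 divn1 [RHS](divn_eq n Q); congr (_ * _ + _).
rewrite -[RHS]IH ?ltn_divLR -?expnSr //; apply: eq_nat_of_digits => j /andP[_ jd].
by rewrite /digit subSn // expnS divnMA.
Qed.

Lemma digits_inj m n n' : n < Q ^ m -> n' < Q ^ m ->
  (forall r, r < m -> digit n r = digit n' r) -> n = n'.
Proof.
move=> ltn ltn' eq_digit; rewrite -(nat_of_digitsK ltn) -(nat_of_digitsK ltn').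
by apply: eq_nat_of_digits => j /andP[j0 jm]; rewrite eq_digit // ltn_subrL j0 (leq_trans j0 jm).
Qed.

Lemma digit_low k m n r : r < m -> digit (k * Q ^ m + n) r = digit n r.
Proof.
move=> rm; rewrite /digit -(subnK (ltnW rm)) expnD mulnA divnMDl ?expn_gt0 ?Q_gt0 //.
have mr_gt0 : 0 < m - r by rewrite subn_gt0.
by rewrite -(prednK mr_gt0) expnSr !mulnA modnMDl.
Qed.

Lemma digit_high k m n r :
  n < Q ^ m -> m <= r -> digit (k * Q ^ m + n) r = digit (k * Q ^ m) r.
Proof.
move=> ltn mr; have Qm_gt0 : 0 < Q ^ m by rewrite expn_gt0 Q_gt0.
by rewrite /digit -(subnKC mr) expnD !divnMA divnMDl // (divn_small ltn) addn0 mulnK.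
Qed.

End Digits.

Local Open Scope ring_scope.

Section Fractions.
Variable R : numFieldType.

Lemma ler_frac_nat (a b x y : nat) : (0 < x)%N -> (0 < y)%N ->
  (a%:R / x%:R <= b%:R / y%:R :> R) = (a * y <= b * x)%N.
Proof.
move=> x_gt0 y_gt0; rewrite ler_pdivrMr ?ltr0n // mulrAC ler_pdivlMr ?ltr0n //.
by rewrite -!natrM ler_nat.
Qed.

Lemma ltr_frac_nat (a b x y : nat) : (0 < x)%N -> (0 < y)%N ->
  (a%:R / x%:R < b%:R / y%:R :> R) = (a * y < b * x)%N.
Proof.
move=> x_gt0 y_gt0; rewrite ltr_pdivrMr ?ltr0n // mulrAC ltr_pdivlMr ?ltr0n //.
by rewrite -!natrM ltr_nat.
Qed.

Variables (Q : nat) (Q_gt0 : (0 < Q)%N).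

Lemma sum_digit_fracs m f :
  \sum_(1 <= j < m.+1) (f j)%:R / (Q ^ j)%N%:R = (nat_of_digits Q m f)%:R / (Q ^ m)%N%:R :> R.
Proof.
elim: m => [|m IH]; first by rewrite big_geq // mul0r.
have Qm_neq0 : (Q ^ m)%N%:R != 0 :> R by rewrite pnatr_eq0 -lt0n expn_gt0 Q_gt0.
have Q_neq0 : Q%:R != 0 :> R by rewrite pnatr_eq0 -lt0n.
rewrite big_nat_recr //= IH expnSr !natrM natrD natrM.
by field; rewrite Qm_neq0 Q_neq0.
Qed.

Lemma frac_digits_in_interval d m a f : (forall j, f j < Q)%N -> (d <= m)%N ->
  let x := (nat_of_digits Q m f)%:R / (Q ^ m)%N%:R : R in
  (a%:R / (Q ^ d)%N%:R <= x) && (x < a.+1%:R / (Q ^ d)%N%:R) = (nat_of_digits Q d f == a).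
Proof.
move=> fQ dm x; have Qk_gt0 k : (0 < Q ^ k)%N by rewrite expn_gt0 Q_gt0.
rewrite ler_frac_nat // ltr_frac_nat // -(subnKC dm) nat_of_digitsD expnD.
have := nat_of_digits_lt (m - d) (fun j => fQ (d + j)).
set E := (Q ^ (m - d))%N; set D := (Q ^ d)%N; set h := nat_of_digits Q d f.
set r := nat_of_digits _ _ _ => ltr.
have D_gt0 : (0 < D)%N := Qk_gt0 d.
rewrite mulnCA [((_ + r) * D)%N]mulnC [(a.+1 * _)%N]mulnCA.
rewrite (leq_pmul2l D_gt0) (ltn_pmul2l D_gt0).
by apply/andP/eqP => [[]|<-]; nia.
Qed.

End Fractions.

Lemma qadic_of_nat (F : finFieldType) (N r : nat) :
  qadic_of_int F N%:Z r = digit #|F| N r :> nat.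
Proof. by rewrite /qadic_of_int /ord_q /= divz_nat modz_nat /= modn_mod. Qed.

Lemma qadic_of_Negz (F : finFieldType) (N r : nat) :
  qadic_of_int F (Negz N) r = (#|F|.-1 - digit #|F| N r)%N :> nat.
Proof.
have q_gt0 := card_F_gt0 F.
rewrite /qadic_of_int /ord_q /= divNz_nat ?expn_gt0 ?q_gt0 // -NegzE modNz_nat //.
have := ltn_pmod (N %/ #|F| ^ r) q_gt0; rewrite -/(digit _ N r).
set x := digit _ N r => ltx; clearbody x.
have -> : #|F|%:Z - 1 - x%:Z = (#|F| - 1 - x)%N :> int by lia.
by rewrite absz_nat modn_small -?subn1 // -subnDA ltn_subrL q_gt0 andbT add1n.
Qed.

Lemma alt_seq_even n : alt_seq (2 * n) = n%:Z.
Proof.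
rewrite /alt_seq mulnC exprM sqrr_sign mul1r; congr Posz.
by rewrite mulnC mul2n; exact: (half_bit_double n true).
Qed.

(* [Negz n = -(n+1)], whose q-adic digits are the complements [q - 1 - a_r] of those of [n]. *)
Lemma alt_seq_odd n : alt_seq (2 * n).+1 = Negz n.
Proof.
rewrite /alt_seq exprS mulnC exprM sqrr_sign mulr1 NegzE mulN1r; congr (- Posz _).
by rewrite mulnC mul2n -doubleS doubleK.
Qed.

Section Algorithm.
Variables (F : finFieldType) (s : nat) (C : 'I_s -> nat -> seq F).
Local Notation q := #|F|.
Implicit Types (psi : nat -> 'I_q -> F) (lam : 'I_s -> nat -> F -> 'I_q).
Implicit Types (a hi : nat -> 'I_q) (d b : 'I_s -> nat) (y e : 'I_s -> nat -> F).

Definition low_form m i j (v : {ffun 'I_m -> F}) : F := \sum_(r < m) entry (C i j) r * v r.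

Definition high_part psi a m i j : F :=
  \sum_(m <= r < size (C i j) + m) entry (C i j) r * psi r (a r).

Definition low_digits psi m a : {ffun 'I_m -> F} := [ffun r : 'I_m => psi r (a r)].

Lemma alg_digitE psi lam m a hi i j : (forall r, (m <= r)%N -> a r = hi r) ->
  alg_digit C psi lam a i j =
  lam i j (low_form i j (low_digits psi m a) + high_part psi hi m i j).
Proof.
move=> high_a; set g := fun r => entry (C i j) r * psi r (a r).
rewrite /alg_digit -(big_mkord xpredT g).
have -> : \sum_(0 <= r < size (C i j)) g r = \sum_(0 <= r < size (C i j) + m) g r.
  rewrite (big_cat_nat _ (leq_addr m _)) //= [X in _ + X]big1_seq ?addr0 // => r.
  by rewrite mem_index_iota => /andP[_ /andP[le_size _]]; rewrite /g /entry nth_default ?mul0r.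
rewrite (big_cat_nat _ (leq_addl _ m)) //= big_mkord; congr (lam i j (_ + _)).
  by apply: eq_bigr => r _; rewrite ffunE.
by apply: eq_big_nat => r /andP[mr _]; rewrite /g high_a.
Qed.

Definition box_set lam e m d b : {set {ffun 'I_m -> F}} :=
  [set v | [forall i, nat_of_digits q (d i) (fun j => lam i j (low_form i j v + e i j)) == b i]].

Lemma in_elem_interval_trunc psi lam m a hi d b :
  (forall r, (m <= r)%N -> a r = hi r) -> (forall i, (d i <= m)%N) ->
  in_elem_interval q d b (alg_trunc C psi lam a m) =
  (low_digits psi m a \in box_set lam (high_part psi hi m) m d b).
Proof.
move=> high_a dm; rewrite inE; apply: eq_forallb => i.
rewrite /alg_trunc sum_digit_fracs ?card_F_gt0 // frac_digits_in_interval ?dm ?card_F_gt0 //.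
by congr (_ == _); apply: eq_nat_of_digits => j _; rewrite (alg_digitE _ _ _ _ high_a).
Qed.

Lemma alg_trunc_ge0_lt1 psi lam m a i : 0 <= alg_trunc C psi lam a m i < 1.
Proof.
have qm_gt0 : (0 < q ^ m)%N by rewrite expn_gt0 card_F_gt0.
rewrite /alg_trunc sum_digit_fracs ?card_F_gt0 // divr_ge0 //=.
by rewrite ltr_pdivrMr ?ltr0n // mul1r ltr_nat nat_of_digits_lt.
Qed.

Definition fiber m d y : {set {ffun 'I_m -> F}} :=
  [set v | [forall i, forall j : 'I_m, (j < d i)%N ==> (low_form i j.+1 v == y i j.+1)]].

Lemma fiberP m d y v : (forall i, (d i <= m)%N) ->
  reflect (forall i j, (0 < j <= d i)%N -> low_form i j v = y i j) (v \in fiber m d y).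
Proof.
move=> dm; rewrite inE; apply: (iffP forallP) => [fib i j /andP[j_gt0 jd]|fib i].
  have jm : (j.-1 < m)%N by rewrite prednK // (leq_trans jd (dm i)).
  by have /forallP/(_ (Ordinal jm))/implyP := fib i; rewrite /= prednK // jd => /(_ isT)/eqP.
by apply/forallP => j; apply/implyP => jd; apply/eqP/fib.
Qed.

Lemma fiber_eq_box_set lam e m d y :
  (forall i, (d i <= m)%N) -> (forall i j, injective (lam i j)) ->
  fiber m d y =
  box_set lam e m d (fun i => nat_of_digits q (d i) (fun j => lam i j (y i j + e i j))).
Proof.
move=> dm lam_inj; apply/setP => v; rewrite [in RHS]inE.
apply/(fiberP _ _ dm)/forallP => [fib i|box i j jd].
  by apply/eqP/eq_nat_of_digits => j jd; rewrite fib.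
have := nat_of_digits_inj (fun _ => ltn_ord _) (fun _ => ltn_ord _) (eqP (box i)) jd.
by move=> /val_inj/lam_inj/addIr.
Qed.

Lemma box_set_eq_fiber lam e m d b :
  (forall i, (d i <= m)%N) -> (forall i j, bijective (lam i j)) ->
  (forall i, (b i < q ^ d i)%N) -> exists y, box_set lam e m d b = fiber m d y.
Proof.
move=> dm lam_bij b_lt; have q_gt0 := card_F_gt0 F.
pose bd i j := digit q (b i) (d i - j).
have preimage i j : exists x, lam i j x == ord_q F (bd i j).
  by have [g _ gK] := lam_bij i j; exists (g (ord_q F (bd i j))); rewrite gK.
exists (fun i j => xchoose (preimage i j) - e i j); apply/setP => v; rewrite inE.
have lam_y i j : lam i j (xchoose (preimage i j) - e i j + e i j) = bd i j :> nat.
  by rewrite subrK (eqP (xchooseP (preimage i j))) /= modn_small // ltn_pmod.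
have b_digits i : nat_of_digits q (d i) (bd i) = b i by rewrite nat_of_digitsK.
apply/forallP/(fiberP _ _ dm) => [box i j jd|fib i].
  have eq_digits : nat_of_digits q (d i) (fun j => lam i j (low_form i j v + e i j)) =
                   nat_of_digits q (d i) (bd i) by rewrite b_digits; exact/eqP/box.
  have := nat_of_digits_inj (fun _ => ltn_ord _) (fun _ => ltn_pmod _ q_gt0) eq_digits jd.
  move=> eq_lam; have /val_inj := etrans eq_lam (esym (lam_y i j)).
  by move=> /(bij_inj (lam_bij i j))/addIr.
by rewrite -b_digits; apply/eqP/eq_nat_of_digits => j jd; rewrite fib ?lam_y.
Qed.

(* [A n] is the digit sequence of the [n]-th input of a block of [q^m]
   consecutive inputs, [hi] that of its first input. *)
Definition digit_block m (A : 'I_(q ^ m) -> nat -> 'I_q) hi : Prop :=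
  (forall n r, (m <= r)%N -> A n r = hi r) /\ injective (fun n => [ffun r : 'I_m => A n r]).

Lemma card_block_in_interval psi lam m (A : 'I_(q ^ m) -> nat -> 'I_q) hi d b :
  (forall r, injective (psi r)) -> digit_block A hi -> (forall i, (d i <= m)%N) ->
  #|[set n | in_elem_interval q d b (alg_trunc C psi lam (A n) m)]| =
  #|box_set lam (high_part psi hi m) m d b|.
Proof.
move=> psi_inj [high_A A_inj] dm.
have low_inj : injective (fun n => low_digits psi m (A n)).
  move=> n n' /ffunP eq_low; apply: A_inj; apply/ffunP => r; rewrite !ffunE.
  by apply: (psi_inj r); have := eq_low r; rewrite !ffunE.
have low_bij : bijective (fun n => low_digits psi m (A n)).
  by apply: inj_card_bij; rewrite // card_ord card_ffun !card_ord.
rewrite -(on_card_preimset (onW_bij _ low_bij)); apply: eq_card => n.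
by rewrite !inE (in_elem_interval_trunc _ _ _ (high_A n) dm) inE.
Qed.

Lemma leq_summand_sub m t d : (\sum_i d i)%N = (m - t)%N -> forall i, (d i <= m)%N.
Proof.
move=> sum_d i; apply: leq_trans (leq_subr t m); rewrite -sum_d.
by rewrite (bigD1 i) //= leq_addr.
Qed.

Lemma card_fiber_of_net psi lam m t (A : 'I_(q ^ m) -> nat -> 'I_q) hi :
  (forall r, injective (psi r)) -> (forall i j, injective (lam i j)) -> digit_block A hi ->
  @is_net s q t m (fun n => alg_trunc C psi lam (A n) m) ->
  forall d, (\sum_i d i)%N = (m - t)%N -> forall y, #|fiber m d y| = (q ^ t)%N.
Proof.
move=> psi_inj lam_inj blockA [_ [_ net]] d sum_d y; have dm := leq_summand_sub sum_d.
rewrite (fiber_eq_box_set (high_part psi hi m) y dm lam_inj).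
rewrite -(card_block_in_interval _ _ psi_inj blockA dm) net // => i.
by apply: nat_of_digits_lt => j; exact: ltn_ord.
Qed.

Lemma net_of_card_fiber psi lam m t (A : 'I_(q ^ m) -> nat -> 'I_q) hi :
  (forall r, injective (psi r)) -> (forall i j, bijective (lam i j)) -> digit_block A hi ->
  (t <= m)%N ->
  (forall d, (\sum_i d i)%N = (m - t)%N -> forall y, #|fiber m d y| = (q ^ t)%N) ->
  @is_net s q t m (fun n => alg_trunc C psi lam (A n) m).
Proof.
move=> psi_inj lam_bij blockA tm fibers; split=> //; split=> [n i|d b sum_d b_lt].
  exact: alg_trunc_ge0_lt1.
have dm := leq_summand_sub sum_d.
rewrite (card_block_in_interval _ _ psi_inj blockA dm).
by have [y ->] := box_set_eq_fiber (high_part psi hi m) dm lam_bij b_lt; apply: fibers.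
Qed.

End Algorithm.

Section Blocks.
Variable F : finFieldType.
Local Notation q := #|F|.

Lemma digit_block_nat m k :
  digit_block (fun n : 'I_(q ^ m) => qadic_of_int F (k * q ^ m + n)%N)
              (qadic_of_int F (k * q ^ m)%N).
Proof.
have q_gt0 := card_F_gt0 F.
split=> [n r mr|n n' /ffunP eq_low]; apply: ord_inj.
  by rewrite !qadic_of_nat digit_high.
apply: (digits_inj q_gt0 (ltn_ord n) (ltn_ord n')) => r rm.
have := eq_low (Ordinal rm); rewrite !ffunE => /(congr1 (@nat_of_ord _)).
by rewrite !qadic_of_nat !digit_low.
Qed.

Lemma digit_block_even m k :
  digit_block (fun n : 'I_(q ^ m) => qadic_of_int F (alt_seq (2 * (k * q ^ m + n))))
              (qadic_of_int F (k * q ^ m)%N).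
Proof.
have [high_A A_inj] := digit_block_nat m k.
by split=> [n r|n n']; rewrite !alt_seq_even; [exact: high_A | exact: A_inj].
Qed.

Lemma digit_block_odd m k :
  digit_block (fun n : 'I_(q ^ m) => qadic_of_int F (alt_seq (2 * (k * q ^ m + n)).+1))
              (qadic_of_int F (Negz (k * q ^ m))).
Proof.
have q_gt0 := card_F_gt0 F.
split=> [n r mr|n n' /ffunP eq_low]; apply: ord_inj; rewrite ?alt_seq_odd.
  by rewrite !qadic_of_Negz digit_high.
apply: (digits_inj q_gt0 (ltn_ord n) (ltn_ord n')) => r rm.
have := eq_low (Ordinal rm); rewrite !ffunE !alt_seq_odd => /(congr1 (@nat_of_ord _)).
rewrite !qadic_of_Negz !digit_low //.
have := ltn_pmod (n %/ q ^ r) q_gt0; have := ltn_pmod (n' %/ q ^ r) q_gt0.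
rewrite -!/(digit q _ r); move: (digit q n r) (digit q n' r) => x x'; lia.
Qed.

End Blocks.

Theorem corollary1 (F : finFieldType) (s : nat) (C : 'I_s -> nat -> seq F)
  (T : nat -> nat) :
  (1 <= s)%N ->
  (forall m, (T m <= m)%N) ->
  (* C generates a (T,s)-sequence via Algorithm 1 for some admissible bijections *)
  (exists (psi1 : nat -> 'I_#|F| -> F) (lam1 : 'I_s -> nat -> F -> 'I_#|F|),
     (forall r, bijective (psi1 r)) /\
     (exists R, forall r, (R <= r)%N -> psi1 r (ord_q F 0) = 0) /\
     (forall i j, bijective (lam1 i j)) /\
     is_TS_seq #|F| T (fun m n => alg_trunc C psi1 lam1 (qadic_of_int F n%:Z) m)) ->
  forall (psi : nat -> 'I_#|F| -> F) (lam : 'I_s -> nat -> F -> 'I_#|F|),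
    (forall r, bijective (psi r)) ->
    (forall i j, bijective (lam i j)) ->
    is_TS_seq #|F| T
      (fun m n => alg_trunc C psi lam (qadic_of_int F (alt_seq (2 * n)%N)) m) /\
    is_TS_seq #|F| T
      (fun m n => alg_trunc C psi lam (qadic_of_int F (alt_seq (2 * n).+1)) m).
Proof.
move=> _ leT [psi1 [lam1 [psi1_bij [_ [lam1_bij seq1]]]]] psi lam psi_bij lam_bij.
have psi1_inj r := bij_inj (psi1_bij r); have lam1_inj i j := bij_inj (lam1_bij i j).
have psi_inj r := bij_inj (psi_bij r).
have fibers m : (T m < m)%N -> forall d, (\sum_i d i)%N = (m - T m)%N ->
    forall y, #|fiber C m d y| = (#|F| ^ T m)%N.
  move=> Tm; have := seq1 0 m Tm.
  exact: card_fiber_of_net psi1_inj lam1_inj (digit_block_nat F m 0).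
split=> k m Tm.
  exact: net_of_card_fiber psi_inj lam_bij (digit_block_even F m k) (leT m) (fibers m Tm).
exact: net_of_card_fiber psi_inj lam_bij (digit_block_odd F m k) (leT m) (fibers m Tm).
Qed.
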